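(* Let $c\geq 2$ be an integer such that $c+1$ is a prime power, and let $m\geq c+1$ be any prime power. Then there exists a $q$-ary $c$-frameproof code of length $c+2$ and cardinality $\frac{c+2}{c}(q-1)^2$, where $q=cm+1$.
   Context: For $P\subseteq F^l$ over a finite alphabet $F$, $desc(P)=\{x\in F^l: \text{for every } i\in\{1,\ldots,l\} \text{ there is } y\in P \text{ with } x_i=y_i\}$. For an integer $c\geq 2$, a $c$-frameproof code of length $l$ is a subset $C\subseteq F^l$ with $desc(P)\cap C=P$ for every $P\subseteq C$ with $|P|\leq c$; it is $q$-ary if $|F|=q$. *)

From mathcomp Require Import all_boot all_order.
Set Implicit Arguments. Unset Strict Implicit. Unset Printing Implicit Defensive.

Definition prime_power (n : nat) : Prop :=
  exists p k : nat, prime p /\ 0 < k /\ n = p ^ k.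


Definition desc (F : finType) (l : nat) (P : {set {ffun 'I_l -> F}})
  : {set {ffun 'I_l -> F}} :=
  [set x : {ffun 'I_l -> F} | [forall i : 'I_l, [exists y in P, x i == y i]]].

Definition frameproof (F : finType) (l c : nat) (C : {set {ffun 'I_l -> F}})
  : Prop :=
  forall P : {set {ffun 'I_l -> F}}, P \subset C -> #|P| <= c ->
    desc P :&: C = P.

From mathcomp Require Import all_boot all_order all_algebra all_field.
From mathcomp Require Import ring zify.
Set Implicit Arguments. Unset Strict Implicit. Unset Printing Implicit Defensive.
Import GRing.Theory.

(* Index the codewords by pairs (u, v) of affine forms, u nonzero over GF(c+1)
   and v arbitrary over GF(m), evaluated at c+2 distinct points of the
   projective lines over these fields.  Coordinate k carries the symbol
   (u(t_k), v(s_k)) when u(t_k) != 0 and one shared extra symbol otherwise,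
   which gives an alphabet of c*m+1 symbols and c(c+2)m^2 codewords.
   A nonzero u vanishes at most once, so every codeword has c+1 coordinates
   with a non-extra symbol; and two codewords that share such a symbol in two
   coordinates coincide, since two affine forms agreeing at two points are
   equal.  Hence a codeword outside a coalition P can only be produced by P if
   its c+1 such coordinates are taken from c+1 distinct members of P. *)

Local Open Scope ring_scope.

(* [option K] is the projective line over K, with [None] the point at
   infinity, where the form [a + b X] takes the value of its leading
   coefficient. *)
Definition peval (K : fieldType) (ab : K * K) (t : option K) : K :=
  match t with Some t => ab.1 + ab.2 * t | None => ab.2 end.

Lemma peval0 (K : fieldType) (t : option K) : peval (0, 0) t = 0.
Proof. by case: t => [t|] //=; rewrite mul0r addr0. Qed.

Lemma peval_inj2 (K : fieldType) (ab cd : K * K) t1 t2 :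
  t1 != t2 -> peval ab t1 = peval cd t1 -> peval ab t2 = peval cd t2 -> ab = cd.
Proof.
case: ab cd => a b [a' b']; case: t1 => [t1|]; case: t2 => [t2|] //= t12.
- move=> e1 e2; have eb : b = b'.
    apply/eqP; rewrite -subr_eq0; apply/eqP/(mulIf (_ : t1 - t2 != 0)).
      by rewrite subr_eq0; apply: contra t12 => /eqP ->.
    have -> : (b - b') * (t1 - t2) = a + b * t1 - (a' + b' * t1) - (a + b * t2 - (a' + b' * t2)).
      by ring.
    by rewrite e1 e2 !subrr mul0r.
  by move: e1; rewrite eb => /addIr ->.
- by move=> e1 eb; move: e1; rewrite eb => /addIr ->.
- by move=> eb e2; move: e2; rewrite eb => /addIr ->.
Qed.

Lemma peval_eq0_2 (K : fieldType) (ab : K * K) t1 t2 :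
  t1 != t2 -> peval ab t1 = 0 -> peval ab t2 = 0 -> ab = (0, 0).
Proof. by move=> t12 e1 e2; apply: (peval_inj2 t12); rewrite peval0. Qed.

Local Close Scope ring_scope.

Section TwoFieldCode.

Variables (G F : finFieldType) (c n : nat).
Variables (ptG : 'I_(c + 2) -> option G) (ptF : 'I_(c + 2) -> option F).
Variable enc : option ({x : G | x != 0%R} * F) -> 'I_n.
Hypothesis c_gt0 : 0 < c.
Hypotheses (ptG_inj : injective ptG) (ptF_inj : injective ptF).
Hypothesis enc_inj : injective enc.

Local Notation index := ((G * G) * (F * F))%type.

Definition symbol (g : G) (f : F) : option ({x : G | x != 0%R} * F) :=
  if insub g is Some s then Some (s, f) else None.

Lemma symbol_inj g f g' f' : g != 0%R -> symbol g f = symbol g' f' -> g = g' /\ f = f'.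
Proof.
rewrite /symbol => g_neq0; rewrite (insubT (fun x => x != 0%R) g_neq0).
by case: insubP => [s _ <- [<- ->]|].
Qed.

Definition codeword (p : index) : {ffun 'I_(c + 2) -> 'I_n} :=
  [ffun k => enc (symbol (peval p.1 (ptG k)) (peval p.2 (ptF k)))].

Definition code_index : {set index} := setX [set~ (0%R, 0%R)] setT.

Definition two_field_code := codeword @: code_index.

Definition zero_coords (p : index) := [set k | peval p.1 (ptG k) == 0%R].

Lemma card_zero_coords p : p \in code_index -> #|zero_coords p| <= 1.
Proof.
rewrite !inE /= => /andP[p_neq0 _].
apply/card_le1_eqP => k1 k2; rewrite !inE => /eqP z1 /eqP z2.
apply/eqP; apply: contraR p_neq0 => k12; apply/eqP.
by apply: (peval_eq0_2 _ z1 z2); apply: contra k12 => /eqP /ptG_inj ->.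
Qed.

Lemma card_nonzero_coords p : p \in code_index -> c < #|~: zero_coords p|.
Proof.
move=> /card_zero_coords; have := cardsC (zero_coords p).
by rewrite card_ord; lia.
Qed.

Lemma codeword_agree2 p p' k1 k2 : k1 != k2 ->
  k1 \notin zero_coords p -> k2 \notin zero_coords p ->
  codeword p k1 = codeword p' k1 -> codeword p k2 = codeword p' k2 -> p = p'.
Proof.
rewrite !inE !ffunE => k12 nz1 nz2.
move=> /enc_inj /(symbol_inj nz1) [g1 f1] /enc_inj /(symbol_inj nz2) [g2 f2].
have ptG12 : ptG k1 != ptG k2 by apply: contra k12 => /eqP /ptG_inj ->.
have ptF12 : ptF k1 != ptF k2 by apply: contra k12 => /eqP /ptF_inj ->.
case: p p' g1 f1 g2 f2 {nz1 nz2} => [u v] [u' v'] /= g1 f1 g2 f2.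
by rewrite (peval_inj2 ptG12 g1 g2) (peval_inj2 ptF12 f1 f2).
Qed.

Lemma codeword_inj : {in code_index &, injective codeword}.
Proof.
move=> p p' p_idx _ pp'.
have /card_gt1P [k1 [k2 [nz1 nz2 k12]]] : 1 < #|~: zero_coords p|.
  by apply: leq_ltn_trans (card_nonzero_coords p_idx).
by rewrite !in_setC in nz1 nz2; apply: (codeword_agree2 k12 nz1 nz2); rewrite pp'.
Qed.

Lemma card_two_field_code :
  #|two_field_code| = (#|G| * #|G|).-1 * (#|F| * #|F|).
Proof.
rewrite card_in_imset; last exact: codeword_inj.
by rewrite cardsX cardsC1 cardsT !card_prod.
Qed.

Lemma two_field_code_frameproof : frameproof c two_field_code.
Proof.
move=> P P_code P_le_c; apply/setP => x; rewrite !inE.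
have [x_P | x_notP] := boolP (x \in P).
  rewrite (subsetP P_code _ x_P) andbT.
  by apply/forallP => i; apply/existsP; exists x; rewrite x_P eqxx.
apply/negbTE/negP => /andP [/forallP x_desc /imsetP [p p_idx x_p]].
pose cover k := odflt x [pick y in P | x k == y k].
have coverP k : cover k \in P /\ x k = cover k k.
  rewrite /cover; case: pickP => [y /andP [y_P /eqP ->] // | none].
  have /existsP [y /andP [y_P xy]] := x_desc k.
  by have := none y; rewrite y_P xy.
have cover_inj : {in ~: zero_coords p &, injective cover}.
  move=> k1 k2; rewrite !in_setC => nz1 nz2 cover12; apply/eqP; apply: contraT => k12.
  have [y_P x_y1] := coverP k1; have [_ x_y2] := coverP k2.
  have /imsetP [p' _ y_p'] := subsetP P_code _ y_P.
  suff pp' : p = p' by move: x_notP; rewrite x_p pp' -y_p' y_P.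
  by apply: (codeword_agree2 k12 nz1 nz2); rewrite -x_p -y_p' // cover12.
have cover_P : (cover @: ~: zero_coords p) \subset P.
  by apply/subsetP => y /imsetP [k _ ->]; exact: (coverP k).1.
have := subset_leq_card cover_P; rewrite (card_in_imset cover_inj).
by have := card_nonzero_coords p_idx; lia.
Qed.

End TwoFieldCode.

Lemma ord_inj_into (T : finType) n : n <= #|T| -> {f : 'I_n -> T | injective f}.
Proof.
move=> le_nT; exists (fun k => enum_val (widen_ord le_nT k)).
by move=> a b /enum_val_inj /(congr1 val) /= /val_inj.
Qed.

Lemma ord_inj_from (T : finType) n : #|T| <= n -> {f : T -> 'I_n | injective f}.
Proof.
move=> le_Tn; exists (fun t => widen_ord le_Tn (enum_rank t)).
by move=> a b /(congr1 val) /= /val_inj /enum_rank_inj.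
Qed.

Lemma finField_of_prime_power n : prime_power n -> exists K : finFieldType, #|K| = n.
Proof. by case=> p [k [p_pr [k_gt0 ->]]]; have [K _ card_K] := pPrimePowerField p_pr k_gt0; exists K. Qed.

Theorem corollary2 (c m : nat) :
  2 <= c -> prime_power c.+1 -> prime_power m -> c.+1 <= m ->
  exists C : {set {ffun 'I_(c + 2) -> 'I_(c * m + 1)}},
    frameproof c C /\ #|C| * c = (c + 2) * (c * m + 1 - 1) ^ 2.
Proof.
move=> c_ge2 /finField_of_prime_power [G card_G] /finField_of_prime_power [F card_F] le_cm.
have [ptG ptG_inj] := @ord_inj_into (option G) (c + 2) ltac:(by rewrite card_option card_G addn2).
have [ptF ptF_inj] := @ord_inj_into (option F) (c + 2) ltac:(by rewrite card_option card_F addn2).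
have card_symbols : #|{: option ({x : G | x != 0%R} * F)}| = c * m + 1.
  rewrite card_option card_prod card_sig card_F addn1; congr (_ * _).+1.
  by rewrite -[c]/(c.+1.-1) -card_G -(cardC1 (0%R : G)); apply: eq_card => x; rewrite !inE.
have [enc enc_inj] := ord_inj_from (eq_leq card_symbols).
have c_gt0 : 0 < c by apply: ltnW.
exists (two_field_code ptG ptF enc); split.
  exact: two_field_code_frameproof c_gt0 ptG_inj ptF_inj enc_inj.
rewrite (card_two_field_code c_gt0 ptG_inj ptF_inj enc_inj) card_G card_F addnK.
have -> : (c.+1 * c.+1).-1 = c * (c + 2) by rewrite -subn1; lia.
ring.
Qed.
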